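(* Let $W\colon \mathrm{GL}^+(3)\to\mathbb{R}$ be a differentiable stored energy density, where $\mathrm{GL}^+(3)=\{X\in\mathbb{R}^{3\times 3}: \det X>0\}$, and let $S_1(F)=DW(F)$ denote its first Piola–Kirchhoff stress tensor. Assume $W$ is strictly rank-one convex in the monotonicity sense: for every $F\in\mathrm{GL}^+(3)$ and all $\xi,\eta\in\mathbb{R}^3$ with $\xi\otimes\eta\neq 0$ and $F+\xi\otimes\eta\in\mathrm{GL}^+(3)$, $$\langle S_1(F+\xi\otimes\eta)-S_1(F),\,\xi\otimes\eta\rangle_{\mathbb{R}^{3\times3}}>0.$$ Define the Cauchy stress $\sigma\colon\mathrm{GL}^+(3)\to\mathbb{R}^{3\times3}$ by $\sigma(F)=S_1(F)\,(\mathrm{Cof}\,F)^{-1}$. Then $\sigma$ is rank-one injective at every $F\in\mathrm{GL}^+(3)$: if $F\in\mathrm{GL}^+(3)$, $\xi,\eta\in\mathbb{R}^3$ with $F+\xi\otimes\eta\in\mathrm{GL}^+(3)$ and $\sigma(F+\xi\otimes\eta)=\sigma(F)$, then $\xi\otimes\eta=0$.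
   Context: $\langle X,Y\rangle_{\mathbb{R}^{3\times3}}=\mathrm{tr}(X^TY)$ is the Frobenius inner product; $\xi\otimes\eta$ is the dyadic product, the matrix with entries $\xi_i\eta_j$; $\mathrm{Cof}\,F=(\det F)\,F^{-T}$ is the cofactor matrix. A stress tensor $S$ is called rank-one injective at $F$ if $S(F+\xi\otimes\eta)=S(F)$ holds only for $\xi\otimes\eta=0$. *)

From HB Require Import structures.
From mathcomp Require Import all_boot all_order all_algebra.
From mathcomp Require Import all_classical all_reals all_analysis.
Set Implicit Arguments. Unset Strict Implicit. Unset Printing Implicit Defensive.
Import Order.TTheory GRing.Theory Num.Theory.
Import numFieldNormedType.Exports.
Local Open Scope ring_scope.

Definition frob (R : ringType) (X Y : 'M[R]_3) : R := \tr (X^T *m Y).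

Definition dyad (R : ringType) (xi eta : 'cV[R]_3) : 'M[R]_3 :=
  \matrix_(i, j) (xi i 0 * eta j 0).

Definition Cof (R : comUnitRingType) (F : 'M[R]_3) : 'M[R]_3 :=
  \det F *: (invmx F)^T.

Definition cauchy_stress (R : comUnitRingType) (S1 : 'M[R]_3 -> 'M[R]_3) (F : 'M[R]_3)
  : 'M[R]_3 := S1 F *m invmx (Cof F).

(* Let G = F + xi (x) eta and suppose sigma(G) = sigma(F) =: s.  Then
   S1(G) - S1(F) = s (Cof G - Cof F), and <M, xi (x) eta> = xi . M eta, so the
   monotonicity pairing equals xi . s (Cof G eta - Cof F eta).  This vanishes
   because the cofactor matrix does not move along a rank-one direction:
   Cof(A + xi (x) eta) eta = Cof A eta, since the i-th entry of Cof A eta is the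
   determinant of A with its i-th row replaced by eta, and the update only adds
   multiples of that row to the other rows.  Strict monotonicity then forces
   xi (x) eta = 0. *)

From HB Require Import structures.
From mathcomp Require Import all_boot all_order all_algebra.
From mathcomp Require Import all_classical all_reals all_analysis.
Import Order.TTheory GRing.Theory Num.Theory.
Import numFieldNormedType.Exports.
Local Open Scope ring_scope.

Section AdjugateRankOne.
Variables (R : comNzRingType) (n : nat).
Implicit Types (A : 'M[R]_n) (u v : 'cV[R]_n).

Lemma det_transvection u i : u i 0 = 0 -> \det (1%:M + u *m delta_mx 0 i) = 1.
Proof.
move=> ui0; set T := _ + _.
have rowT j : T i j = (i == j)%:R by rewrite !mxE big_ord1 !mxE ui0 mul0r addr0.
rewrite (expand_det_row _ i) (bigD1 i) //= big1 => [|j /negPf ji]; last first.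
  by rewrite rowT eq_sym ji mul0r.
rewrite rowT eqxx mul1r addr0 /cofactor -signr_odd addnn odd_double expr0 mul1r.
suff -> : row' i (col' i T) = 1%:M by rewrite det1.
apply/matrixP => a b; rewrite !mxE big_ord1 !mxE (inj_eq lift_inj) eqxx.
by rewrite (eq_sym (lift i b)) (negPf (neq_lift i b)) mulr0 addr0.
Qed.

Lemma det_add_mulmx_row A u i : u i 0 = 0 -> \det (A + u *m row i A) = \det A.
Proof.
move=> ui0; rewrite rowE mulmxA -{1}[A]mul1mx -mulmxDl det_mulmx.
by rewrite det_transvection ?mul1r.
Qed.

Lemma adjT_mulmxE A v i :
  ((\adj A)^T *m v) i 0 = \det (\matrix_k (if k == i then v^T else row k A)).
Proof.
rewrite (expand_det_row _ i) !mxE; apply: eq_bigr => j _.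
rewrite !mxE eqxx mulrC; congr (_ * _); first by rewrite mxE.
rewrite /cofactor; congr (_ * \det _); apply/matrixP => a b.
by rewrite !mxE (eq_sym (lift i a)) (negPf (neq_lift i a)) mxE.
Qed.

Lemma adj_rank_one_update A u v :
  (\adj (A + u *m v^T))^T *m v = (\adj A)^T *m v.
Proof.
apply/matrixP => i j; rewrite ord1 !adjT_mulmxE.
pose u' := \col_k (if k == i then 0 else u k 0).
rewrite -[RHS](@det_add_mulmx_row _ u' i); last by rewrite mxE eqxx.
congr (\det _); apply/matrixP => k l.
rewrite !mxE !big_ord1 !mxE eqxx.
by case: eqP => _; rewrite !mxE ?mul0r ?addr0 // big_ord1 !mxE.
Qed.

End AdjugateRankOne.

Lemma dyadE (R : nzRingType) (xi eta : 'cV[R]_3) : dyad xi eta = xi *m eta^T.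
Proof. by apply/matrixP => i j; rewrite !mxE big_ord1 !mxE. Qed.

Lemma frob_dyad (R : comNzRingType) (X : 'M[R]_3) (xi eta : 'cV[R]_3) :
  frob X (dyad xi eta) = (xi^T *m X *m eta) 0 0.
Proof.
rewrite /frob dyadE mulmxA mxtrace_mulC trace_mx11.
have -> : eta^T *m (X^T *m xi) = (xi^T *m X *m eta)^T by rewrite !trmx_mul trmxK mulmxA.
by rewrite mxE.
Qed.

Section Cofactor.
Variables (R : comUnitRingType) (F : 'M[R]_3).
Hypothesis unitF : F \in unitmx.

Lemma Cof_adj : Cof F = (\adj F)^T.
Proof.
by rewrite /Cof /invmx unitF linearZ /= scalerA mulrV ?scale1r // -unitmxE.
Qed.

Lemma unitmx_Cof : Cof F \in unitmx.
Proof.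
by rewrite unitmxE /Cof detZ det_tr det_inv unitrM unitrV unitrX_pos // andbb -unitmxE.
Qed.

End Cofactor.

Lemma cauchy_stressK {R : comUnitRingType} (S1 : 'M[R]_3 -> 'M[R]_3) {F} :
  F \in unitmx -> cauchy_stress S1 F *m Cof F = S1 F.
Proof. by move=> unitF; rewrite /cauchy_stress mulmxKV ?unitmx_Cof. Qed.

Lemma frob_stress_jump_dyad (R : comUnitRingType) (S1 : 'M[R]_3 -> 'M[R]_3)
    F (xi eta : 'cV[R]_3) :
  F \in unitmx -> F + dyad xi eta \in unitmx ->
  cauchy_stress S1 (F + dyad xi eta) = cauchy_stress S1 F ->
  frob (S1 (F + dyad xi eta) - S1 F) (dyad xi eta) = 0.
Proof.
move=> unitF unitG eq_sigma.
rewrite frob_dyad -(cauchy_stressK S1 unitF) -(cauchy_stressK S1 unitG) eq_sigma.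
rewrite -mulmxBr -!mulmxA mulmxBl !Cof_adj // {1}dyadE adj_rank_one_update.
by rewrite subrr !mulmx0 mxE.
Qed.

Lemma det_gt0_unitmx (R : numFieldType) n (A : 'M[R]_n) :
  0 < \det A -> A \in unitmx.
Proof. by move=> detA_gt0; rewrite unitmxE unitfE gt_eqF. Qed.

Theorem mainTheorem1 (R : realType) (W : 'M[R]_3 -> R) (S1 : 'M[R]_3 -> 'M[R]_3)
  (hW : forall F : 'M[R]_3, 0 < \det F ->
          differentiable W F /\ forall H : 'M[R]_3, 'd W F H = frob (S1 F) H)
  (hconv : forall (F : 'M[R]_3) (xi eta : 'cV[R]_3),
          0 < \det F -> dyad xi eta != 0 -> 0 < \det (F + dyad xi eta) ->
          0 < frob (S1 (F + dyad xi eta) - S1 F) (dyad xi eta)) :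
  forall (F : 'M[R]_3) (xi eta : 'cV[R]_3),
    0 < \det F -> 0 < \det (F + dyad xi eta) ->
    cauchy_stress S1 (F + dyad xi eta) = cauchy_stress S1 F -> dyad xi eta = 0.
Proof.
move=> F xi eta detF_gt0 detG_gt0 eq_sigma.
have [//|dyad_neq0] := eqVneq (dyad xi eta) 0.
have := hconv F xi eta detF_gt0 dyad_neq0 detG_gt0.
by rewrite frob_stress_jump_dyad ?det_gt0_unitmx ?ltxx.
Qed.
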